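(* Let $\varphi:(0,1]\to[0,1]$ be an increasing submultiplicative function (i.e. $\varphi(xy)\le\varphi(x)\varphi(y)$ for $x,y\in(0,1]$). The following are equivalent: (1) there exists $\lambda\in(0,1)$ with $\varphi(\lambda)<1$; (2) there is $C>0$ with $\varphi(x)\le C(1+\log(1/x))^{-1}$ for all $x\in(0,1]$; (3) for every $p>0$ there is $C_p>0$ with $\varphi(x)\le C_p(1+\log(1/x))^{-p}$ for all $x\in(0,1]$; (4) $\lim_{x\to0}\varphi(x)=0$. *)

From Stdlib Require Export Reals.
Open Scope R_scope.

(* phi : (0,1] -> [0,1], modelled as a total function R -> R whose
   relevant properties are only required on (0,1]. *)
Definition maps_into_unit (phi : R -> R) : Prop :=
  forall x, 0 < x <= 1 -> 0 <= phi x <= 1.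

Definition increasing_on_01 (phi : R -> R) : Prop :=
  forall x y, 0 < x <= 1 -> 0 < y <= 1 -> x <= y -> phi x <= phi y.

Definition submultiplicative_on_01 (phi : R -> R) : Prop :=
  forall x y, 0 < x <= 1 -> 0 < y <= 1 -> phi (x * y) <= phi x * phi y.

Definition tends_to_0_at_0 (phi : R -> R) : Prop :=
  forall eps, 0 < eps -> exists delta, 0 < delta /\
    forall x, 0 < x <= 1 -> x < delta -> Rabs (phi x) < eps.

(* If phi lam <= a < 1 for some lam in (0,1), submultiplicativity propagates the
   bound down the geometric sequence lam^n: phi (lam y) <= a phi y.  Hence phi
   decays like the power x^b with b = ln a / ln lam > 0, and a power of x beats
   every power of 1 + ln (1/x).  Conversely, logarithmic decay forces
   phi x -> 0, and then phi lam < 1 for every small lam. *)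
From Stdlib Require Import Reals Lra.
Open Scope R_scope.

Lemma ln_le_sub1 y : 0 < y -> ln y <= y - 1.
Proof.
  intros Hy. pose proof (exp_ineq1_le (ln y)) as H.
  rewrite exp_ln in H; lra.
Qed.

Lemma exp_le_compat x y : x <= y -> exp x <= exp y.
Proof. intros [Hlt | ->]; [left; apply exp_increasing, Hlt | right; reflexivity]. Qed.

Lemma ln_lt_0 y : 0 < y < 1 -> ln y < 0.
Proof. intros Hy. rewrite <- ln_1. apply ln_increasing; lra. Qed.

Lemma ln_1_div x : 0 < x -> ln (1 / x) = - ln x.
Proof. intros Hx. unfold Rdiv. rewrite Rmult_1_l. exact (ln_Rinv x Hx). Qed.

Lemma ln_1_div_ge0 x : 0 < x <= 1 -> 0 <= ln (1 / x).
Proof.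
  intros Hx. rewrite ln_1_div by lra.
  destruct (Req_dec x 1) as [->|Hx1]; [rewrite ln_1; lra|].
  pose proof (ln_lt_0 x ltac:(lra)). lra.
Qed.

(* The tangent line of [ln] at [p / b], scaled by [p]. *)
Lemma mul_ln_le_linear p b t : 0 < p -> 0 < b -> 0 < t ->
  p * ln t <= b * t + p * (ln (p / b) - 1).
Proof.
  intros Hp Hb Ht.
  assert (Hu : 0 < t * b / p) by (apply Rdiv_lt_0_compat; nra).
  pose proof (ln_le_sub1 _ Hu) as Hln.
  assert (Hsplit : ln (t * b / p) = ln t - ln (p / b)).
  { unfold Rdiv. rewrite !ln_mult, !ln_Rinv by
      (try apply Rmult_lt_0_compat; try apply Rinv_0_lt_compat; lra).
    ring. }
  assert (Hscale : p * (t * b / p - 1) = b * t - p) by (field; lra).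
  nra.
Qed.

Lemma geometric_induction (P : R -> Prop) lam : 0 < lam < 1 ->
  (forall x, lam < x <= 1 -> P x) ->
  (forall y, 0 < y <= 1 -> P y -> P (lam * y)) ->
  forall x, 0 < x <= 1 -> P x.
Proof.
  intros Hlam Htop Hstep.
  assert (Hlevel : forall n x, lam ^ n < x <= 1 -> P x).
  { induction n as [|n IH]; intros x Hx; simpl in Hx; [lra|].
    destruct (Rlt_le_dec lam x) as [Hgt|Hle]; [apply Htop; lra|].
    assert (Hx_lam : x = lam * (x / lam)) by (field; lra).
    assert (Hy : lam ^ n < x / lam <= 1).
    { split; [apply Rmult_lt_reg_l with lam | apply Rmult_le_reg_l with lam];
        rewrite <- ?Hx_lam; lra. }
    rewrite Hx_lam.
    apply Hstep; [pose proof (pow_lt lam n); lra | apply IH; exact Hy]. }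
  intros x Hx.
  destruct (pow_lt_1_zero lam ltac:(rewrite Rabs_right; lra) x ltac:(lra))
    as [N HN].
  apply (Hlevel N). specialize (HN N (le_n N)).
  rewrite Rabs_right in HN; [lra | left; apply pow_lt; lra].
Qed.

Lemma inv_1_plus_ln_vanishes C eps : 0 < C -> 0 < eps ->
  exists delta, 0 < delta /\
    forall x, 0 < x <= 1 -> x < delta -> C * / (1 + ln (1 / x)) < eps.
Proof.
  intros HC Heps. exists (exp (- (C / eps))). split; [apply exp_pos|].
  intros x Hx Hxd.
  assert (Hlarge : C / eps < 1 + ln (1 / x)).
  { rewrite ln_1_div by lra.
    assert (ln x < - (C / eps)).
    { rewrite <- (ln_exp (- (C / eps))). apply ln_increasing; lra. }
    lra. }
  assert (HCe : 0 < C / eps) by (apply Rdiv_lt_0_compat; lra).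
  apply Rmult_lt_reg_r with (1 + ln (1 / x)); [lra|].
  rewrite Rmult_assoc, Rinv_l, Rmult_1_r by lra.
  apply Rmult_lt_reg_r with (/ eps); [apply Rinv_0_lt_compat; lra|].
  replace (eps * (1 + ln (1 / x)) * / eps) with (1 + ln (1 / x)) by (field; lra).
  exact Hlarge.
Qed.

Section SubmultiplicativeDecay.

Variable phi : R -> R.
Hypothesis phi_range : maps_into_unit phi.
Hypothesis phi_submul : submultiplicative_on_01 phi.

Lemma submul_power_bound lam a : 0 < lam < 1 -> 0 < a < 1 -> phi lam <= a ->
  forall x, 0 < x <= 1 -> phi x <= Rpower x (ln a / ln lam) / a.
Proof.
  intros Hlam Ha Hphi.
  set (b := ln a / ln lam).
  assert (Hlam_b : Rpower lam b = a).
  { unfold Rpower, b. pose proof (ln_lt_0 lam Hlam).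
    replace (ln a / ln lam * ln lam) with (ln a) by (field; lra).
    apply exp_ln; lra. }
  assert (Hb : 0 < b).
  { apply Rdiv_neg_neg; apply ln_lt_0; lra. }
  apply geometric_induction with lam; [exact Hlam | |].
  - intros x Hx.
    assert (Hgt : a < Rpower x b) by (rewrite <- Hlam_b; apply Rlt_Rpower_l; lra).
    apply Rle_trans with 1; [apply phi_range; lra|].
    apply Rmult_le_reg_r with a; [lra|].
    unfold Rdiv. rewrite Rmult_assoc, Rinv_l by lra. lra.
  - intros y Hy IH.
    pose proof (phi_range lam ltac:(lra)). pose proof (phi_range y Hy).
    apply Rle_trans with (phi lam * phi y); [apply phi_submul; lra|].
    apply Rle_trans with (a * (Rpower y b / a)); [apply Rmult_le_compat; lra|].
    rewrite <- Rpower_mult_distr, Hlam_b by lra.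
    right. field. lra.
Qed.

Lemma submul_log_power_decay : (exists lam, 0 < lam < 1 /\ phi lam < 1) ->
  forall p, 0 < p -> exists Cp, 0 < Cp /\
    forall x, 0 < x <= 1 -> phi x <= Cp * Rpower (1 + ln (1 / x)) (- p).
Proof.
  intros [lam [Hlam Hphi]] p Hp.
  (* [a] is kept away from 0 so that [ln a] is defined. *)
  set (a := Rmax (phi lam) (1 / 2)).
  assert (Ha : 0 < a < 1) by (unfold a, Rmax; destruct Rle_dec; lra).
  set (b := ln a / ln lam).
  assert (Hb : 0 < b) by (apply Rdiv_neg_neg; apply ln_lt_0; lra).
  exists (exp (b + p * (ln (p / b) - 1)) / a).
  split; [apply Rdiv_lt_0_compat; [apply exp_pos | lra]|].
  intros x Hx.
  eapply Rle_trans; [apply (submul_power_bound lam a); auto; apply Rmax_l|].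
  fold b. unfold Rpower. set (s := ln (1 / x)).
  assert (Hs : 0 <= s) by apply (ln_1_div_ge0 x Hx).
  replace (ln x) with (- s) by (unfold s; rewrite ln_1_div; lra).
  replace (exp (b + p * (ln (p / b) - 1)) / a * exp (- p * ln (1 + s)))
    with (exp (b + p * (ln (p / b) - 1) + - p * ln (1 + s)) / a)
    by (rewrite exp_plus; field; lra).
  apply Rmult_le_compat_r; [left; apply Rinv_0_lt_compat; lra|].
  pose proof (mul_ln_le_linear p b (1 + s) Hp Hb ltac:(lra)).
  apply exp_le_compat. lra.
Qed.

End SubmultiplicativeDecay.

Theorem corollary2p2 (phi : R -> R)
  (Hrange : maps_into_unit phi)
  (Hincr : increasing_on_01 phi)
  (Hsub : submultiplicative_on_01 phi) :
  let P1 := exists lam, 0 < lam < 1 /\ phi lam < 1 in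
  let P2 := exists C, 0 < C /\
      forall x, 0 < x <= 1 -> phi x <= C * / (1 + ln (1 / x)) in
  let P3 := forall p, 0 < p -> exists Cp, 0 < Cp /\
      forall x, 0 < x <= 1 -> phi x <= Cp * Rpower (1 + ln (1 / x)) (- p) in
  let P4 := tends_to_0_at_0 phi in
  (P1 <-> P2) /\ (P1 <-> P3) /\ (P1 <-> P4).
Proof.
  intros P1 P2 P3 P4.
  assert (H13 : P1 -> P3) by exact (submul_log_power_decay phi Hrange Hsub).
  assert (H32 : P3 -> P2).
  { intros H3. destruct (H3 1 ltac:(lra)) as [C [HC Hbound]].
    exists C. split; [exact HC|]. intros x Hx.
    pose proof (ln_1_div_ge0 x Hx). specialize (Hbound x Hx).
    rewrite Rpower_Ropp, Rpower_1 in Hbound by lra. exact Hbound. }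
  assert (H24 : P2 -> P4).
  { intros [C [HC Hbound]] eps Heps.
    destruct (inv_1_plus_ln_vanishes C eps HC Heps) as [delta [Hdelta Hsmall]].
    exists delta. split; [exact Hdelta|]. intros x Hx Hxd.
    pose proof (Hrange x Hx). pose proof (Hbound x Hx). pose proof (Hsmall x Hx Hxd).
    rewrite Rabs_right; lra. }
  assert (H41 : P4 -> P1).
  { intros H4. destruct (H4 (1 / 2) ltac:(lra)) as [delta [Hdelta Hsmall]].
    set (lam := Rmin (delta / 2) (1 / 2)).
    assert (Hlam : 0 < lam <= 1 / 2 /\ lam < delta)
      by (unfold lam, Rmin; destruct Rle_dec; lra).
    exists lam. split; [lra|].
    pose proof (Hsmall lam ltac:(lra) ltac:(lra)).
    pose proof (Rle_abs (phi lam)). lra. }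
  tauto.
Qed.
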